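(* Let $K$ be a Markov kernel on a finite set $\mathcal{X}$, reversible with respect to a probability measure $\pi$, and assume that for all $f:\mathcal{X}\to\mathbb{R}$ \[ \mathrm{Ent}_\pi(f^2)\le2\sigma^2\int\sum_{y\in\mathcal{X}}(f(x)-f(y))^2K(x,y)\,d\pi(x). \] Then for every $f:\mathcal{X}\to\mathbb{R}$ and every $p\ge2$, \[ \mathrm{Ent}_\pi(|f|^p)\le\sigma^2p^2\int|f|^{p-2}|\partial f|^2d\pi, \qquad \mathrm{Ent}_\pi(|f|^p)\le\sigma^2p^2\|f\|_p^{p-2}\|\partial f\|_p^2, \] where $|\partial f|(x)=\big(\sum_{y\in\mathcal{X}}(f(x)-f(y))^2K(x,y)\big)^{1/2}$.
   Context: $\mathrm{Ent}_\pi(g)=\mathbb{E}_\pi g\log g-\mathbb{E}_\pi g\log\mathbb{E}_\pi g$ for $g\ge0$; $\|g\|_p=(\mathbb{E}_\pi|g|^p)^{1/p}$ and $\|\partial f\|_p=\||\partial f|\|_p$. *)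

From HB Require Import structures.
From mathcomp Require Import all_boot all_order all_algebra.
From mathcomp Require Import all_classical all_reals all_analysis.
Set Implicit Arguments. Unset Strict Implicit. Unset Printing Implicit Defensive.
Import Order.TTheory GRing.Theory Num.Theory.
Local Open Scope ring_scope.

Section Defs.
Variables (R : realType) (T : finType).

Definition is_prob (pi : T -> R) : Prop :=
  (forall x, 0 <= pi x) /\ \sum_(x : T) pi x = 1.

Definition is_markov_kernel (K : T -> T -> R) : Prop :=
  (forall x y, 0 <= K x y) /\ (forall x, \sum_(y : T) K x y = 1).

Definition reversible (pi : T -> R) (K : T -> T -> R) : Prop :=
  forall x y, pi x * K x y = pi y * K y x.

Definition Epi (pi : T -> R) (g : T -> R) : R := \sum_(x : T) pi x * g x.

(* Ent_pi(g) = E g log g - E g log E g  (ln 0 = 0, so 0 log 0 = 0) *)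
Definition Ent (pi : T -> R) (g : T -> R) : R :=
  Epi pi (fun x => g x * ln (g x)) - Epi pi g * ln (Epi pi g).

Definition grad2 (K : T -> T -> R) (f : T -> R) (x : T) : R :=
  \sum_(y : T) (f x - f y) ^+ 2 * K x y.

Definition gradabs (K : T -> T -> R) (f : T -> R) (x : T) : R :=
  Num.sqrt (grad2 K f x).

Definition Lpnorm (pi : T -> R) (p : R) (g : T -> R) : R :=
  (Epi pi (fun x => `|g x| `^ p)) `^ (p^-1).

End Defs.

From HB Require Import structures.
From mathcomp Require Import all_boot all_order all_algebra.
From mathcomp Require Import all_classical all_reals all_analysis.
From mathcomp Require Import ring lra.
Import Order.TTheory GRing.Theory Num.Theory.
Set Implicit Arguments. Unset Strict Implicit. Unset Printing Implicit Defensive.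
Local Open Scope ring_scope.

(* Apply the log-Sobolev inequality to g = |f|^(p/2), so that g^2 = |f|^p.
   Convexity of t |-> t^(p/2) bounds (g(x) - g(y))^2 by
   (p^2/4) (|f(x)|^(p-2) + |f(y)|^(p-2)) (f(x) - f(y))^2, and reversibility
   makes the two halves of the resulting Dirichlet form equal, which gives
   the first inequality. The second follows from the first by Hölder's
   inequality with exponents p/(p-2) and p/2. *)

Section powR_inequalities.
Variable R : realType.
Implicit Types a b u v p q r s A B : R.

Lemma powR_tangent_le a b q : 0 <= a -> 0 <= b -> 1 <= q ->
  a `^ q - b `^ q <= q * a `^ (q - 1) * (a - b).
Proof.
move=> a0 b0; rewrite le_eqVlt => /predU1P[<-|q_gt1].
  by rewrite subrr powRr0 !powRr1 // !mul1r.
have q0 : 0 < q by apply: lt_trans q_gt1.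
have q1_gt0 : 0 < q - 1 by rewrite subr_gt0.
have conj : q^-1 + (q / (q - 1))^-1 = 1.
  by rewrite invf_div; field; rewrite gt_eqF.
have := conjugate_powR b0 (powR_ge0 a (q - 1)) q0 (divr_gt0 q0 q1_gt0) conj.
rewrite -powRrM (_ : (q - 1) * (q / (q - 1)) = q); last by field; rewrite gt_eqF.
rewrite -(mulr_powRB1 a0 q0); set X := a `^ (q - 1) => young.
have {young} : q * (b * X) <= b `^ q + (q - 1) * (a * X).
  have := ler_wpM2l (ltW q0) young.
  rewrite (_ : q * (b `^ q / q + a * X / (q / (q - 1))) = b `^ q + (q - 1) * (a * X)) //.
  by field; rewrite (gt_eqF q0) (gt_eqF q1_gt0).
have -> : q * X * (a - b) = q * (a * X) - q * (b * X) by ring.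
lra.
Qed.

Lemma sqr_subr_powR_le a b q : 0 <= a -> 0 <= b -> 1 <= q ->
  (a `^ q - b `^ q) ^+ 2 <=
    q ^+ 2 * (a `^ ((q - 1) * 2) + b `^ ((q - 1) * 2)) * (a - b) ^+ 2.
Proof.
wlog ba : a b / b <= a.
  move=> wlog_ba a0 b0 q1; have [|/ltW ab] := leP b a; first by move/wlog_ba; apply.
  rewrite (addrC (a `^ ((q - 1) * 2))) -sqrrN opprB -(sqrrN (a - b)) opprB.
  exact: wlog_ba.
move=> a0 b0 q1.
have gap_ge0 : 0 <= a `^ q - b `^ q.
  by rewrite subr_ge0 ge0_ler_powR ?nnegrE // (le_trans _ q1).
apply: le_trans (_ : (q * a `^ (q - 1) * (a - b)) ^+ 2 <= _).
  have tangent := powR_tangent_le a0 b0 q1.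
  by rewrite lerXn2r ?nnegrE ?tangent ?(le_trans gap_ge0 tangent).
rewrite !exprMn powRrM powR_mulrn ?powR_ge0 //.
by rewrite ler_wpM2r ?sqr_ge0 // ler_wpM2l ?sqr_ge0 // lerDl powR_ge0.
Qed.

Lemma sqr_subr_normr_powR_half_le u v p : 2 <= p ->
  (`|u| `^ (p / 2) - `|v| `^ (p / 2)) ^+ 2 <=
    p ^+ 2 / 4 * (`|u| `^ (p - 2) + `|v| `^ (p - 2)) * (u - v) ^+ 2.
Proof.
move=> p2; have q1 : 1 <= p / 2 by rewrite ler_pdivlMr // mul1r.
apply: le_trans (sqr_subr_powR_le (normr_ge0 u) (normr_ge0 v) q1) _.
rewrite (_ : (p / 2 - 1) * 2 = p - 2); last by field.
rewrite (_ : (p / 2) ^+ 2 = p ^+ 2 / 4); last by field.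
rewrite ler_wpM2l ?mulr_ge0 ?addr_ge0 ?powR_ge0 ?sqr_ge0 ?(le_trans _ p2) //.
rewrite -(real_normK (num_real (u - v))) -(real_normK (num_real (`|u| - `|v|))).
by rewrite lerXn2r ?nnegrE // ler_dist_dist.
Qed.

Lemma powR_div_powRV a b r : 0 <= a -> 0 <= b -> 0 < r ->
  (a / b `^ r^-1) `^ r = a `^ r / b.
Proof.
move=> a0 b0 r0; rewrite powRM ?invr_ge0 ?powR_ge0 // -powR_inv1 ?powR_ge0 //.
by rewrite powRAC -(powRrM b) mulVf ?gt_eqF // powRr1 // powR_inv1.
Qed.

Lemma conjugate_powR_scaled a b A B r s : 0 <= a -> 0 <= b -> 0 < A -> 0 < B ->
  0 < r -> 0 < s -> r^-1 + s^-1 = 1 ->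
  a * b <= A `^ r^-1 * B `^ s^-1 * (a `^ r / A / r + b `^ s / B / s).
Proof.
move=> a0 b0 A0 B0 r0 s0 rs.
have A'_gt0 : 0 < A `^ r^-1 by apply: powR_gt0.
have B'_gt0 : 0 < B `^ s^-1 by apply: powR_gt0.
have := conjugate_powR (divr_ge0 a0 (ltW A'_gt0)) (divr_ge0 b0 (ltW B'_gt0)) r0 s0 rs.
rewrite !powR_div_powRV ?(ltW A0) ?(ltW B0) //.
rewrite -(ler_pM2l (mulr_gt0 A'_gt0 B'_gt0)).
suff -> : A `^ r^-1 * B `^ s^-1 * (a / A `^ r^-1 * (b / B `^ s^-1)) = a * b by [].
by field; rewrite !gt_eqF.
Qed.

End powR_inequalities.

Section weighted_sums.
Variables (R : realType) (T : finType) (w : T -> R).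
Hypothesis w_ge0 : forall x, 0 <= w x.
Implicit Types c p r s : R.

Lemma ler_Epi (g h : T -> R) : (forall x, g x <= h x) -> Epi w g <= Epi w h.
Proof. by move=> gh; apply: ler_sum => x _; rewrite ler_wpM2l. Qed.

Lemma EpiD (g h : T -> R) : Epi w (fun x => g x + h x) = Epi w g + Epi w h.
Proof. by rewrite /Epi -big_split; apply: eq_bigr => x _; rewrite mulrDr. Qed.

Lemma EpiZl c (g : T -> R) : Epi w (fun x => c * g x) = c * Epi w g.
Proof. by rewrite /Epi mulr_sumr; apply: eq_bigr => x _; rewrite mulrCA. Qed.

Lemma EpiZr c (g : T -> R) : Epi w (fun x => g x * c) = Epi w g * c.
Proof. by rewrite /Epi mulr_suml; apply: eq_bigr => x _; rewrite mulrA. Qed.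

Lemma Epi_ge0 (g : T -> R) : (forall x, 0 <= g x) -> 0 <= Epi w g.
Proof. by move=> g_ge0; apply: sumr_ge0 => x _; rewrite mulr_ge0. Qed.

Lemma Epi_powR_eq0 (f g : T -> R) r : (forall x, 0 <= f x) -> 0 < r ->
  Epi w (fun x => f x `^ r) = 0 -> Epi w (fun x => f x * g x) = 0.
Proof.
move=> f_ge0 r0 /eqP; rewrite psumr_eq0 => [/allP wf0|x _]; last first.
  by rewrite mulr_ge0 ?powR_ge0.
apply: big1 => x _; have := wf0 x (mem_index_enum x).
by rewrite /= mulf_eq0 => /orP[/eqP->|/eqP/powR_eq0_eq0->]; rewrite ?mul0r ?mulr0.
Qed.

Lemma hoelder_Epi (f g : T -> R) r s :
  (forall x, 0 <= f x) -> (forall x, 0 <= g x) ->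
  0 < r -> 0 < s -> r^-1 + s^-1 = 1 ->
  Epi w (fun x => f x * g x) <=
  Epi w (fun x => f x `^ r) `^ r^-1 * Epi w (fun x => g x `^ s) `^ s^-1.
Proof.
move=> f_ge0 g_ge0 r0 s0 rs.
set A := Epi w (fun x => f x `^ r); set B := Epi w (fun x => g x `^ s).
have [A0|A_neq0] := eqVneq A 0.
  by rewrite (Epi_powR_eq0 g f_ge0 r0 A0) mulr_ge0 ?powR_ge0.
have [B0|B_neq0] := eqVneq B 0.
  rewrite (_ : Epi w _ = Epi w (fun x => g x * f x)); last first.
    by congr (Epi _ _); apply/funext => x; rewrite mulrC.
  by rewrite (Epi_powR_eq0 f g_ge0 s0 B0) mulr_ge0 ?powR_ge0.
have A_gt0 : 0 < A by rewrite lt_def A_neq0 Epi_ge0 // => x; apply: powR_ge0.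
have B_gt0 : 0 < B by rewrite lt_def B_neq0 Epi_ge0 // => x; apply: powR_ge0.
have young x := conjugate_powR_scaled (f_ge0 x) (g_ge0 x) A_gt0 B_gt0 r0 s0 rs.
apply: le_trans (ler_Epi young) _.
rewrite EpiZl ger_pMr ?mulr_gt0 ?powR_gt0 // EpiD !EpiZr.
by rewrite !mulfV ?gt_eqF // !mul1r rs.
Qed.

Lemma Epi_powR_mul_sqr_le_Lpnorm (f h : T -> R) p : 2 <= p -> (forall x, 0 <= h x) ->
  Epi w (fun x => `|f x| `^ (p - 2) * h x ^+ 2) <=
  Lpnorm w p f `^ (p - 2) * Lpnorm w p h ^+ 2.
Proof.
move=> p2 h_ge0; have p_gt0 : 0 < p by apply: lt_le_trans p2.
have hE : (fun x => (h x ^+ 2) `^ (p / 2)) = (fun x => `|h x| `^ p).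
  apply/funext => x; rewrite ger0_norm // -powR_mulrn // -powRrM.
  by congr (_ `^ _); field.
rewrite /Lpnorm -(powR_mulrn 2 (powR_ge0 _ _)).
move: p2; rewrite le_eqVlt => /predU1P[p2|p_gt2].
  rewrite -{}p2 in hE *; rewrite subrr [X in _ <= X * _]powRr0 mul1r.
  rewrite -powRrM mulVf // powRr1; last by apply: Epi_ge0 => x; apply: powR_ge0.
  rewrite -hE; apply: ler_Epi => x; rewrite powRr0 mul1r divff // powRr1 //.
  exact: sqr_ge0.
have p2_gt0 : 0 < p - 2 by rewrite subr_gt0.
have fE : (fun x => (`|f x| `^ (p - 2)) `^ (p / (p - 2))) = (fun x => `|f x| `^ p).
  apply/funext => x; rewrite -powRrM.
  by congr (_ `^ _); field; rewrite gt_eqF.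
have conj : (p / (p - 2))^-1 + (p / 2)^-1 = 1.
  by rewrite !invf_div; field; rewrite gt_eqF.
apply: le_trans (hoelder_Epi (f := fun x => `|f x| `^ (p - 2))
  (g := fun x => h x ^+ 2) (fun x => powR_ge0 _ _) (fun x => sqr_ge0 _)
  (divr_gt0 p_gt0 p2_gt0) (divr_gt0 p_gt0 (ltr0Sn _ 1)) conj) _.
rewrite fE hE !invf_div.
move: (Epi w (fun x => `|f x| `^ p)) (Epi w (fun x => `|h x| `^ p)) => A B.
by rewrite -!powRrM [(p - 2) / p]mulrC [2 / p]mulrC.
Qed.

End weighted_sums.

Section reversible_dirichlet_form.
Variables (R : realType) (T : finType) (pi : T -> R) (K : T -> T -> R).
Hypotheses (pi_ge0 : forall x, 0 <= pi x) (K_ge0 : forall x y, 0 <= K x y).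
Hypothesis piK_rev : reversible pi K.

Lemma grad2_ge0 (f : T -> R) x : 0 <= grad2 K f x.
Proof. by apply: sumr_ge0 => y _; rewrite mulr_ge0 ?sqr_ge0. Qed.

Lemma gradabs_ge0 (f : T -> R) x : 0 <= gradabs K f x.
Proof. exact: sqrtr_ge0. Qed.

Lemma sqr_gradabs (f : T -> R) x : gradabs K f x ^+ 2 = grad2 K f x.
Proof. exact/sqr_sqrtr/grad2_ge0. Qed.

Lemma Epi_mul_grad2 (A f : T -> R) :
  Epi pi (fun x => A x * grad2 K f x) =
  \sum_x \sum_y pi x * K x y * (A x * (f x - f y) ^+ 2).
Proof.
apply: eq_bigr => x _; rewrite /grad2 !mulr_sumr.
by apply: eq_bigr => y _; ring.
Qed.

Lemma reversible_sum_swap (A f : T -> R) :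
  \sum_x \sum_y pi x * K x y * (A y * (f x - f y) ^+ 2) =
  \sum_x \sum_y pi x * K x y * (A x * (f x - f y) ^+ 2).
Proof.
rewrite exchange_big /=; apply: eq_bigr => x _; apply: eq_bigr => y _.
by rewrite -piK_rev -sqrrN opprB.
Qed.

Lemma Epi_grad2_normr_powR_half_le (f : T -> R) (p : R) : 2 <= p ->
  Epi pi (grad2 K (fun x => `|f x| `^ (p / 2))) <=
  p ^+ 2 / 2 * Epi pi (fun x => `|f x| `^ (p - 2) * grad2 K f x).
Proof.
move=> p2; set A := fun x => `|f x| `^ (p - 2).
apply: le_trans (_ : _ <= p ^+ 2 / 4 *
  \sum_x \sum_y pi x * K x y * ((A x + A y) * (f x - f y) ^+ 2)) _.
  rewrite mulr_sumr; apply: ler_sum => x _; rewrite /grad2 !mulr_sumr.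
  apply: ler_sum => y _.
  rewrite [leLHS](_ : _ = pi x * K x y * (`|f x| `^ (p / 2) - `|f y| `^ (p / 2)) ^+ 2);
    last by ring.
  rewrite [leRHS](_ : _ = pi x * K x y * (p ^+ 2 / 4 * (A x + A y) * (f x - f y) ^+ 2));
    last by ring.
  by rewrite ler_wpM2l ?mulr_ge0 // sqr_subr_normr_powR_half_le.
under eq_bigr do under eq_bigr do rewrite mulrDl mulrDr.
rewrite Epi_mul_grad2.
under eq_bigr do rewrite big_split /=.
rewrite big_split /= reversible_sum_swap -mulr2n -[X in _ * X]mulr_natl mulrA.
by rewrite (_ : p ^+ 2 / 4 * 2 = p ^+ 2 / 2) //; field.
Qed.

End reversible_dirichlet_form.

Theorem lemma3p2 (R : realType) (T : finType) (pi : T -> R) (K : T -> T -> R)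
  (sigma : R) :
  is_prob pi -> is_markov_kernel K -> reversible pi K ->
  (forall f : T -> R,
     Ent pi (fun x => f x ^+ 2) <=
     2 * sigma ^+ 2 * Epi pi (grad2 K f)) ->
  forall (f : T -> R) (p : R), 2 <= p ->
    Ent pi (fun x => `|f x| `^ p) <=
      sigma ^+ 2 * p ^+ 2 *
      Epi pi (fun x => `|f x| `^ (p - 2) * gradabs K f x ^+ 2)
    /\
    Ent pi (fun x => `|f x| `^ p) <=
      sigma ^+ 2 * p ^+ 2 * Lpnorm pi p f `^ (p - 2) *
      Lpnorm pi p (gradabs K f) ^+ 2.
Proof.
move=> [pi_ge0 _] [K_ge0 _] piK_rev lsi f p p2.
have Ent_le : Ent pi (fun x => `|f x| `^ p) <=
    sigma ^+ 2 * p ^+ 2 * Epi pi (fun x => `|f x| `^ (p - 2) * gradabs K f x ^+ 2).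
  have -> : (fun x => `|f x| `^ p) = (fun x => (`|f x| `^ (p / 2)) ^+ 2).
    apply/funext => x; rewrite -powR_mulrn ?powR_ge0 // -powRrM.
    by congr (_ `^ _); field.
  apply: le_trans (lsi _) _.
  have sigma2_ge0 : 0 <= 2 * sigma ^+ 2 by rewrite mulr_ge0 ?sqr_ge0.
  apply: le_trans (ler_wpM2l sigma2_ge0
    (Epi_grad2_normr_powR_half_le pi_ge0 K_ge0 piK_rev f p2)) _.
  under [X in _ <= _ * X]eq_bigr do rewrite sqr_gradabs //.
  by rewrite mulrA (_ : 2 * sigma ^+ 2 * (p ^+ 2 / 2) = sigma ^+ 2 * p ^+ 2) //; field.
split=> //; apply: le_trans Ent_le _.
have Lp_le := Epi_powR_mul_sqr_le_Lpnorm pi_ge0 f p2 (gradabs_ge0 K f).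
by rewrite -[leRHS]mulrA ler_wpM2l // mulr_ge0 // sqr_ge0.
Qed.
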